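(* Let $S,T$ be ordered trees, let $f\colon T\to S$ be a rigid surjection, and let $x$ be a leaf of $S$. Let $y$ be the leaf of $T$ that is $f$-conjugate to $x$. Then the image of $f_x=f\upharpoonright T^y$ equals $S^x$, and $f_x\colon T^y\to S^x$ is a rigid surjection.
   Context: A tree is a finite, non-empty poset $(T,\sqsubseteq_T)$ with a smallest element (root) in which the predecessors of each element form a chain (each element is its own predecessor); $v\wedge_T w$ is the largest common predecessor. An ordered tree has a fixed linear order on the immediate successors of each node, inducing the lexicographic linear order $\leq_T$: $v\leq_T w$ if $v\sqsubseteq_T w$, and for incomparable $v,w$, $v\leq_T w$ iff the immediate successor of $v\wedge_T w$ below $v$ precedes the one below $w$. A morphism preserves $\wedge$, is $\leq$-monotone and maps root to root; an embedding is an injective morphism. A function $f\colon T\to S$ is a rigid surjection if there is a morphism $e\colon S\to T$ (unique, called the injection of $f$) with $f\circ e={\rm id}_S$ and $e(f(w))\sqsubseteq_T w$ for all $w$. For $v\in T$, $T^v=\{w\in T\mid w\leq_T v\}$ (ordered tree with inherited orders). A leaf is a $\sqsubseteq$-maximal node. For an embedding $i\colon S\to T$, a leaf $y$ of $T$ is $i$-conjugate to a leaf $x$ of $S$ if: (i) when $x$ is the $\leq_S$-largest leaf of $S$, $y$ is the $\leq_T$-largest leaf of $T$; (ii) otherwise, with $x'$ the $\leq_S$-smallest leaf with $x<_S x'$, $y$ is the $\leq_T$-largest leaf with $y<_T i(x')$ and $i(x)\wedge_T i(x')=y\wedge_T i(x')$. A leaf $y$ of $T$ is $f$-conjugate to $x$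 if it is $i$-conjugate to $x$ for $i$ the injection of $f$ (such $y$ exists and is unique). *)

From mathcomp Require Import all_boot.
Set Implicit Arguments. Unset Strict Implicit. Unset Printing Implicit Defensive.

(* Raw data of a finite ordered tree: carrier, the tree order v ⊑ w (anc v w),
   and a strict order sib on immediate successors of a common node. *)
Record otree := OTree {
  ot_sort :> finType;
  ot_anc : rel ot_sort;
  ot_sib : rel ot_sort
}.

Section TreeNotions.
Variable T : otree.
Local Notation anc := (@ot_anc T).
Local Notation sib := (@ot_sib T).

(* All notions are relative to a subset A of nodes, with inherited orders. *)
Definition is_meet (A : {set T}) (v w m : T) : bool :=
  [&& v \in A, w \in A, m \in A, anc m v, anc m w &
      [forall u in A, (anc u v && anc u w) ==> anc u m]].

Definition is_root (A : {set T}) (r : T) : bool :=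
  (r \in A) && [forall v in A, anc r v].

Definition is_leaf (A : {set T}) (x : T) : bool :=
  (x \in A) && [forall w in A, anc x w ==> (w == x)].

Definition isucc (A : {set T}) (v w : T) : bool :=
  [&& v \in A, w \in A, anc v w, v != w &
      [forall u in A, (anc v u && anc u w) ==> ((u == v) || (u == w))]].

(* lexicographic order <=_T induced by the sibling orders *)
Definition lex (A : {set T}) (v w : T) : bool :=
  [&& v \in A, w \in A &
    (anc v w ||
     [&& ~~ anc w v &
         [exists m, exists c, exists c',
           [&& is_meet A v w m, isucc A m c, isucc A m c', anc c v, anc c' w
             & sib c c']]])].

Definition lex_lt (A : {set T}) (v w : T) : bool := lex A v w && (v != w).

(* T^v = { w | w <=_T v } *)
Definition lexdown (A : {set T}) (v : T) : {set T} := [set w in A | lex A w v].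

Definition ordered_tree : Prop :=
  let A := [set: T] in
  [/\ (forall v, anc v v),
      (forall v w, anc v w -> anc w v -> v = w),
      (forall u v w, anc u v -> anc v w -> anc u w),
      (exists r, is_root A r) &
      (forall u v w, anc u w -> anc v w -> anc u v || anc v u)] /\
  [/\ (forall c c', sib c c' -> exists m, isucc A m c /\ isucc A m c'),
      (forall c, ~~ sib c c),
      (forall c1 c2 c3, sib c1 c2 -> sib c2 c3 -> sib c1 c3) &
      (forall m c c', isucc A m c -> isucc A m c' -> c != c' ->
                       sib c c' || sib c' c)].

Definition largest_leaf (A : {set T}) (y : T) : Prop :=
  is_leaf A y /\ forall z, is_leaf A z -> lex A z y.

Definition next_leaf (A : {set T}) (x x' : T) : Prop :=
  [/\ is_leaf A x', lex_lt A x x' &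
      forall z, is_leaf A z -> lex_lt A x z -> lex A x' z].

End TreeNotions.

Section Maps.
Variables S T : otree.

Definition morphism_on (A : {set S}) (B : {set T}) (e : S -> T) : Prop :=
  [/\ (forall s, s \in A -> e s \in B),
      (forall v w m, is_meet A v w m -> is_meet B (e v) (e w) (e m)),
      (forall v w, lex A v w -> lex B (e v) (e w)) &
      (forall r, is_root A r -> is_root B (e r))].

Definition embedding (e : S -> T) : Prop :=
  morphism_on [set: S] [set: T] e /\ injective e.

Definition i_conjugate (i : S -> T) (x : S) (y : T) : Prop :=
  [/\ is_leaf [set: T] y,
      (largest_leaf [set: S] x -> largest_leaf [set: T] y) &
      (forall x', next_leaf [set: S] x x' ->
        let P z := [/\ is_leaf [set: T] z, lex_lt [set: T] z (i x') &
                       exists m, is_meet [set: T] (i x) (i x') m /\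
                                 is_meet [set: T] z (i x') m] in
        P y /\ forall z, P z -> lex [set: T] z y)].
End Maps.

Section Rigid.
Variables T S : otree.

Definition injection_on (A : {set T}) (B : {set S}) (f : T -> S) (e : S -> T) :=
  [/\ morphism_on B A e,
      (forall s, s \in B -> f (e s) = s) &
      (forall w, w \in A -> ot_anc (e (f w)) w)].

Definition rigid_surj_on (A : {set T}) (B : {set S}) (f : T -> S) : Prop :=
  (forall w, w \in A -> f w \in B) /\ exists e, injection_on A B f e.

Definition rigid_surj (f : T -> S) : Prop := rigid_surj_on [set: T] [set: S] f.

Definition f_conjugate (f : T -> S) (x : S) (y : T) : Prop :=
  exists e, injection_on [set: T] [set: S] f e /\ i_conjugate e x y.
End Rigid.

From mathcomp Require Import all_boot.
Set Implicit Arguments. Unset Strict Implicit. Unset Printing Implicit Defensive.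

(* The injection e of f maps S^x into T^y and f maps T^y into S^x.  Both sets
   are closed downwards in the tree order, so meets, immediate successors, the
   lexicographic order and the root of these subtrees are those of the whole
   trees, and e restricts to an injection of f between them.
   If x is the largest leaf, so is y and both sets are everything.  Otherwise
   let x' be the next leaf and n = x /\ x'.  Every leaf above e x has the
   defining property of y, hence e x <= y.  Conversely, if x < f w for some
   w <= y, then either x' <= f w, so y < e x' <= e (f w); or, as no leaf lies
   strictly between x and x', n is a proper ancestor of f w and f w one of x',
   and y, which branches off e x' at e n, lies strictly left of e (f w).
   Both contradict e (f w) <= w <= y. *)

Section OrderedTree.
Variable U : otree.
Hypothesis HU : ordered_tree U.
Local Notation anc := (@ot_anc U).
Local Notation sib := (@ot_sib U).
Local Notation A0 := [set: U].

Lemma anc_refl v : anc v v. Proof. by have [[h _ _ _ _] _] := HU. Qed.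

Lemma anc_anti v w : anc v w -> anc w v -> v = w.
Proof. by have [[_ h _ _ _] _] := HU; apply: h. Qed.

Lemma anc_trans u v w : anc u v -> anc v w -> anc u w.
Proof. by have [[_ _ h _ _] _] := HU; apply: h. Qed.

Lemma anc_comparable u v w : anc u w -> anc v w -> anc u v || anc v u.
Proof. by have [[_ _ _ _ h] _] := HU; apply: h. Qed.

Lemma exists_root : exists r, is_root A0 r. Proof. by have [[_ _ _ h _] _] := HU. Qed.

Lemma sib_irr c : ~~ sib c c. Proof. by have [_ [_ h _ _]] := HU. Qed.

Lemma sib_trans c1 c2 c3 : sib c1 c2 -> sib c2 c3 -> sib c1 c3.
Proof. by have [_ [_ _ h _]] := HU; apply: h. Qed.

Lemma sib_total m c c' :
  isucc A0 m c -> isucc A0 m c' -> c != c' -> sib c c' || sib c' c.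
Proof. by have [_ [_ _ _ h]] := HU; apply: h. Qed.

Lemma isuccP m c : isucc A0 m c ->
  [/\ anc m c, m != c & forall u, anc m u -> anc u c -> u = m \/ u = c].
Proof.
rewrite /isucc !in_setT /= => /and3P[hmc nmc /forallP hmin]; split=> // u hmu huc.
by move: (hmin u); rewrite in_setT hmu huc => /orP[/eqP|/eqP]; [left|right].
Qed.

Lemma isuccI m c : anc m c -> m != c ->
  (forall u, anc m u -> anc u c -> u = m \/ u = c) -> isucc A0 m c.
Proof.
move=> hmc nmc hmin; rewrite /isucc !in_setT hmc nmc; apply/forallP => u.
rewrite in_setT /=; apply/implyP => /andP[hmu huc].
by case: (hmin u hmu huc) => ->; rewrite eqxx ?orbT.
Qed.

Lemma isucc_below m c u : isucc A0 m c -> anc u c -> u != c -> anc u m.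
Proof.
case/isuccP => hmc _ hmin huc nuc; case/orP: (anc_comparable huc hmc) => // hmu.
by case: (hmin u hmu huc) => e; [rewrite e anc_refl|rewrite e eqxx in nuc].
Qed.

Lemma sib_disjoint m c c' z : isucc A0 m c -> isucc A0 m c' -> sib c c' ->
  anc c z -> anc c' z -> False.
Proof.
move=> hc hc' hs hcz hc'z.
have [hmc nmc _] := isuccP hc; have [hmc' nmc' _] := isuccP hc'.
have ncc' : c != c' by apply/eqP => e; move: hs; rewrite e (negbTE (sib_irr c')).
case/orP: (anc_comparable hcz hc'z) => h.
- by rewrite (anc_anti hmc (isucc_below hc' h ncc')) eqxx in nmc.
- by rewrite eq_sym in ncc'; rewrite (anc_anti hmc' (isucc_below hc h ncc')) eqxx in nmc'.
Qed.

Lemma meetP v w m : is_meet A0 v w m ->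
  [/\ anc m v, anc m w & forall u, anc u v -> anc u w -> anc u m].
Proof.
rewrite /is_meet !in_setT /= => /and3P[hmv hmw /forallP hmax]; split=> // u huv huw.
by move: (hmax u); rewrite in_setT huv huw.
Qed.

Lemma meetI v w m : anc m v -> anc m w ->
  (forall u, anc u v -> anc u w -> anc u m) -> is_meet A0 v w m.
Proof.
move=> hmv hmw hmax; rewrite /is_meet !in_setT hmv hmw; apply/forallP => u.
by rewrite in_setT /=; apply/implyP => /andP[]; apply: hmax.
Qed.

Lemma meet_uniq v w m1 m2 : is_meet A0 v w m1 -> is_meet A0 v w m2 -> m1 = m2.
Proof. by case/meetP=> h1 h1' H1 /meetP[h2 h2' H2]; apply: anc_anti; [apply: H2|apply: H1]. Qed.

Lemma meet_anc v w : anc v w -> is_meet A0 v w v.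
Proof. by move=> hvw; apply: meetI => //; exact: anc_refl. Qed.

Definition branch_lt v w := exists m c c',
  [/\ isucc A0 m c, isucc A0 m c', anc c v, anc c' w & sib c c'].

Lemma branch_lt_nanc v w : branch_lt v w -> ~~ anc v w /\ ~~ anc w v.
Proof.
case=> m [c [c' [hc hc' hcv hc'w hs]]]; split; apply/negP => h.
- exact: sib_disjoint hc hc' hs (anc_trans hcv h) hc'w.
- exact: sib_disjoint hc hc' hs hcv (anc_trans hc'w h).
Qed.

Lemma branch_lt_neq v w : branch_lt v w -> v != w.
Proof. by case/branch_lt_nanc=> /negP nvw _; apply/eqP => e; apply: nvw; rewrite e anc_refl. Qed.

Lemma branch_lt_meet v w m c c' : isucc A0 m c -> isucc A0 m c' -> anc c v ->
  anc c' w -> sib c c' -> is_meet A0 v w m.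
Proof.
move=> hc hc' hcv hc'w hs.
have [hmc _ _] := isuccP hc; have [hmc' _ _] := isuccP hc'.
apply: meetI; [exact: anc_trans hmc hcv|exact: anc_trans hmc' hc'w|] => u huv huw.
case/orP: (anc_comparable huv hcv) => h.
- case: (eqVneq u c) => [e|nuc]; last exact: isucc_below hc h nuc.
  by rewrite e in huw; case: (sib_disjoint hc hc' hs huw hc'w).
- by case: (sib_disjoint hc hc' hs (anc_trans h huw) hc'w).
Qed.

Lemma branch_lt_up u u' v : branch_lt u v -> anc u u' -> branch_lt u' v.
Proof.
case=> m [c [c' [hc hc' hcu hc'v hs]]] h.
by exists m, c, c'; split=> //; exact: anc_trans hcu h.
Qed.

Lemma branch_lt_up_meet u u' v m :
  branch_lt u v -> anc u u' -> is_meet A0 u v m -> is_meet A0 u' v m.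
Proof.
case=> m' [c [c' [hc hc' hcu hc'v hs]]] h hm.
rewrite -(meet_uniq (branch_lt_meet hc hc' hcu hc'v hs) hm).
exact: branch_lt_meet hc hc' (anc_trans hcu h) hc'v hs.
Qed.

Lemma branch_lt_down u v w : branch_lt u v -> anc v w -> branch_lt u w.
Proof.
case=> m [c [c' [hc hc' hcu hc'v hs]]] h.
by exists m, c, c'; split=> //; exact: anc_trans hc'v h.
Qed.

Lemma branch_lt_trans u v w : branch_lt u v -> branch_lt v w -> branch_lt u w.
Proof.
case=> m1 [a [b [ha hb hau hbv hab]]]; case=> m2 [c [d [hc hd hcv hdw hcd]]].
have same_parent : b = c -> m1 = m2.
  move=> e; subst c; have [hm1 n1 _] := isuccP hb; have [hm2 n2 _] := isuccP hc.
  by apply: anc_anti; [exact: isucc_below hc hm1 n1|exact: isucc_below hb hm2 n2].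
case: (eqVneq b c) => [e|nbc].
  have e12 := same_parent e; subst c m2.
  by exists m1, a, d; split=> //; exact: sib_trans hab hcd.
case/orP: (anc_comparable hbv hcv) => h.
- have [hm2 _ _] := isuccP hd.
  by exists m1, a, b; split=> //; exact: anc_trans (isucc_below hc h nbc) (anc_trans hm2 hdw).
- have [hm1 _ _] := isuccP ha; rewrite eq_sym in nbc.
  by exists m2, c, d; split=> //; exact: anc_trans (isucc_below hb h nbc) (anc_trans hm1 hau).
Qed.

Lemma anc_branch_lt u v w : anc u v -> branch_lt v w -> anc u w \/ branch_lt u w.
Proof.
move=> huv [m [c [c' [hc hc' hcv hc'w hs]]]].
case/orP: (anc_comparable huv hcv) => h; last by right; exists m, c, c'.
case: (eqVneq u c) => [->|nuc]; first by right; exists m, c, c'; split; rewrite ?anc_refl.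
have [hmc' _ _] := isuccP hc'.
by left; exact: anc_trans (isucc_below hc h nuc) (anc_trans hmc' hc'w).
Qed.

Lemma lexE v w : lex A0 v w <-> anc v w \/ branch_lt v w.
Proof.
rewrite /lex !in_setT /=; split.
- case/orP=> [|/andP[_ /existsP[m /existsP[c /existsP[c' H]]]]]; first by left.
  by case/and5P: H => _ hc hc' hcv /andP[hc'w hs]; right; exists m, c, c'.
- case=> [->//|hb]; apply/orP; right; have [_ ->] := branch_lt_nanc hb.
  case: hb => m [c [c' [hc hc' hcv hc'w hs]]].
  apply/existsP; exists m; apply/existsP; exists c; apply/existsP; exists c'.
  by rewrite (branch_lt_meet hc hc' hcv hc'w hs) hc hc' hcv hc'w hs.
Qed.

Lemma anc_lex v w : anc v w -> lex A0 v w. Proof. by move=> h; apply/lexE; left. Qed.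
Lemma branch_lt_lex v w : branch_lt v w -> lex A0 v w. Proof. by move=> h; apply/lexE; right. Qed.
Lemma lex_refl v : lex A0 v v. Proof. exact/anc_lex/anc_refl. Qed.

Lemma branch_lt_lex_lt v w : branch_lt v w -> lex_lt A0 v w.
Proof. by move=> h; rewrite /lex_lt branch_lt_lex ?branch_lt_neq. Qed.

Lemma lex_trans u v w : lex A0 u v -> lex A0 v w -> lex A0 u w.
Proof.
move=> /lexE[h|h] /lexE[k|k]; apply/lexE.
- by left; exact: anc_trans h k.
- exact: anc_branch_lt h k.
- by right; exact: branch_lt_down h k.
- by right; exact: branch_lt_trans h k.
Qed.

Lemma lex_anti v w : lex A0 v w -> lex A0 w v -> v = w.
Proof.
move=> /lexE[h|h] /lexE[k|k].
- exact: anc_anti.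
- by have [_ /negP] := branch_lt_nanc k.
- by have [_ /negP] := branch_lt_nanc h.
- by have := branch_lt_neq (branch_lt_trans h k); rewrite eqxx.
Qed.

Lemma lex_lt_le_trans u v w : lex_lt A0 u v -> lex A0 v w -> lex_lt A0 u w.
Proof.
case/andP=> huv nuv hvw; rewrite /lex_lt (lex_trans huv hvw).
by apply: contraNneq nuv => e; apply/eqP/(lex_anti huv); rewrite e.
Qed.

Definition preds v := [set z | anc z v].
Definition succs v := [set z | anc v z].

Lemma preds_lt a b : anc a b -> a != b -> #|preds a| < #|preds b|.
Proof.
move=> hab nab; apply: proper_card; apply/properP; split.
- by apply/subsetP => z; rewrite !inE => hz; exact: anc_trans hz hab.
- exists b; rewrite !inE ?anc_refl //; apply: contraNN nab => hba.
  by rewrite (anc_anti hab hba).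
Qed.

Lemma succs_lt a b : anc a b -> a != b -> #|succs b| < #|succs a|.
Proof.
move=> hab nab; apply: proper_card; apply/properP; split.
- by apply/subsetP => z; rewrite !inE => hz; exact: anc_trans hab hz.
- exists a; rewrite !inE ?anc_refl //; apply: contraNN nab => hba.
  by rewrite (anc_anti hab hba).
Qed.

Lemma meet_exists v w : exists m, is_meet A0 v w m.
Proof.
have [r /andP[_ /forallP hr]] := exists_root.
have hr' z : anc r z by move: (hr z); rewrite in_setT.
have Pr : [pred u | anc u v && anc u w] r by rewrite /= !hr'.
case: (arg_maxnP (fun u => #|preds u|) Pr) => m /andP[hmv hmw] hmax.
exists m; apply: meetI => // u huv huw.
case/orP: (anc_comparable huv hmv) => // hmu.
case: (eqVneq m u) => [->|nmu]; first exact: anc_refl.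
by have := hmax u; rewrite /= huv huw => /(_ isT); rewrite leqNgt preds_lt.
Qed.

Lemma isucc_exists m z : anc m z -> m != z -> exists c, isucc A0 m c /\ anc c z.
Proof.
move=> hmz nmz; pose Q := [pred u | [&& anc m u, anc u z & u != m]].
have Qz : Q z by rewrite /= hmz anc_refl eq_sym nmz.
case: (arg_minnP (fun u => #|preds u|) Qz) => c /and3P[hmc hcz ncm] hmin.
exists c; split=> //; apply: isuccI => //; first by rewrite eq_sym.
move=> u hmu huc; case: (eqVneq u m) => [->|num]; first by left.
right; apply/eqP; apply: contraT => nuc.
by have := hmin u; rewrite /= hmu (anc_trans huc hcz) num => /(_ isT); rewrite leqNgt preds_lt.
Qed.

Lemma lex_total v w : lex A0 v w \/ lex A0 w v.
Proof.
case: (boolP (anc v w)) => hvw; first by left; exact: anc_lex.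
case: (boolP (anc w v)) => hwv; first by right; exact: anc_lex.
have [m /meetP[hmv hmw hmax]] := meet_exists v w.
have [c [hc hcv]] : exists c, isucc A0 m c /\ anc c v.
  by apply: isucc_exists hmv _; apply: contraNneq hvw => <-.
have [c' [hc' hc'w]] : exists c', isucc A0 m c' /\ anc c' w.
  by apply: isucc_exists hmw _; apply: contraNneq hwv => <-.
have ncc' : c != c'.
  have [hmc nmc _] := isuccP hc; apply: contraNneq nmc => e.
  by rewrite e in hcv hmc *; rewrite (anc_anti hmc (hmax c' hcv hc'w)).
by case/orP: (sib_total hc hc' ncc') => hs; [left|right]; apply: branch_lt_lex;
  [exists m, c, c'|exists m, c', c].
Qed.

Lemma leafP x w : is_leaf A0 x -> anc x w -> w = x.
Proof. by rewrite /is_leaf in_setT => /forallP/(_ w); rewrite in_setT /= => /implyP h /h/eqP. Qed.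

Lemma leaf_above s : exists l, is_leaf A0 l /\ anc s l.
Proof.
have Ps : [pred u | anc s u] s by exact: anc_refl.
case: (arg_minnP (fun u => #|succs u|) Ps) => l hsl hmin.
exists l; split=> //; rewrite /is_leaf in_setT; apply/forallP => w.
rewrite in_setT /=; apply/implyP => hlw; apply: contraT => nwl.
by have := hmin w (anc_trans hsl hlw); rewrite leqNgt succs_lt // eq_sym.
Qed.

Lemma largest_leaf_lex x w : largest_leaf A0 x -> lex A0 w x.
Proof.
case=> _ hmax; have [l [hl hwl]] := leaf_above w.
exact: lex_trans (anc_lex hwl) (hmax l hl).
Qed.

Lemma in_lexdown v z : (z \in lexdown A0 v) = lex A0 z v.
Proof. by rewrite inE in_setT. Qed.

Lemma leaf_lex_lt_branch x v : is_leaf A0 x -> lex_lt A0 x v -> branch_lt x v.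
Proof.
move=> hx /andP[/lexE[hxv|//] nxv].
by rewrite (leafP hx hxv) eqxx in nxv.
Qed.

Lemma largest_or_next_leaf x : is_leaf A0 x ->
  largest_leaf A0 x \/ exists x', next_leaf A0 x x'.
Proof.
move=> hx; have [hmax|] := boolP [forall z, is_leaf A0 z ==> lex A0 z x].
  by left; split=> // z hz; move/forallP/(_ z): hmax; rewrite hz.
case/forallPn=> z0; rewrite negb_imply => /andP[hz0 nz0x]; right.
have Pz0 : [pred z | is_leaf A0 z && lex_lt A0 x z] z0.
  rewrite /= hz0 /lex_lt; have [hxz0|] := lex_total x z0; last by rewrite (negbTE nz0x).
  by rewrite hxz0; apply: contraNneq nz0x => ->; exact: lex_refl.
case: (arg_minnP (fun z => #|lexdown A0 z|) Pz0) => x' /andP[hx' hxx'] hmin.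
exists x'; split=> // z hz hxz; have [//|hzx'] := lex_total x' z.
case: (eqVneq z x') => [->|nzx']; first exact: lex_refl.
have := hmin z; rewrite /= hz hxz => /(_ isT); rewrite leqNgt => /negP[].
apply: proper_card; apply/properP; split.
- by apply/subsetP => u; rewrite !in_lexdown => hu; exact: lex_trans hu hzx'.
- exists x'; rewrite !in_lexdown ?lex_refl //; apply: contraNN nzx' => hx'z.
  by rewrite (lex_anti hzx' hx'z).
Qed.

Lemma next_leaf_anc x x' s :
  next_leaf A0 x x' -> lex_lt A0 x s -> lex A0 s x' -> anc s x'.
Proof.
case=> _ _ hmin /andP[hxs nxs] /lexE[//|hb].
have [l [hl hsl]] := leaf_above s.
have hbl := branch_lt_up hb hsl.
have hxl : lex_lt A0 x l.
  rewrite /lex_lt (lex_trans hxs (anc_lex hsl)); apply: contraNneq nxs => exl.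
  by apply/eqP/(lex_anti hxs); rewrite exl; exact: anc_lex.
have elx' := lex_anti (branch_lt_lex hbl) (hmin l hl hxl).
by have := branch_lt_neq hbl; rewrite elx' eqxx.
Qed.

Lemma lex_lt_meet_below y t m u : is_meet A0 y t m -> lex_lt A0 y t ->
  anc m u -> anc u t -> u != m -> lex_lt A0 y u.
Proof.
move=> hm /andP[/lexE[hyt|[m' [c [c' [hc hc' hcy hc't hs]]]]] _] hmu hut num.
  by rewrite -(meet_uniq (meet_anc hyt) hm) in hmu num *; rewrite /lex_lt anc_lex // eq_sym.
have em : m' = m := meet_uniq (branch_lt_meet hc hc' hcy hc't hs) hm; subst m'.
have hc'u : anc c' u.
  case/orP: (anc_comparable hc't hut) => // huc'.
  case: (eqVneq u c') => [->|nuc']; first exact: anc_refl.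
  by rewrite (anc_anti (isucc_below hc' huc' nuc') hmu) eqxx in num.
by apply: branch_lt_lex_lt; exists m, c, c'.
Qed.

Section DownClosed.
Variable D : {set U}.
Hypothesis D_down : forall u w, anc u w -> w \in D -> u \in D.

Lemma is_meet_lift v w m : is_meet D v w m -> is_meet A0 v w m.
Proof.
case/and5P=> hv _ _ hmv /andP[hmw /forallP hmax].
apply: meetI => // u huv huw.
by move: (hmax u); rewrite (D_down huv hv) huv huw.
Qed.

Lemma is_meet_restrict v w m :
  v \in D -> w \in D -> is_meet A0 v w m -> is_meet D v w m.
Proof.
move=> hv hw /meetP[hmv hmw hmax]; rewrite /is_meet hv hw (D_down hmv hv) hmv hmw.
by apply/forallP => u; apply/implyP => _; apply/implyP => /andP[]; apply: hmax.
Qed.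

Lemma isucc_lift m c : isucc D m c -> isucc A0 m c.
Proof.
case/and5P=> _ hc hmc nmc /forallP hmin; apply: isuccI => // u hmu huc.
by move: (hmin u); rewrite (D_down huc hc) hmu huc => /orP[/eqP|/eqP]; [left|right].
Qed.

Lemma isucc_restrict m c : c \in D -> isucc A0 m c -> isucc D m c.
Proof.
move=> hc /isuccP[hmc nmc hmin]; rewrite /isucc hc (D_down hmc hc) hmc nmc.
apply/forallP => u; apply/implyP => _; apply/implyP => /andP[hmu huc].
by case: (hmin u hmu huc) => ->; rewrite eqxx ?orbT.
Qed.

Lemma lex_lift v w : lex D v w -> lex A0 v w.
Proof.
case/and3P=> _ _ /orP[|/andP[nwv /existsP[m /existsP[c /existsP[c' H]]]]].
  exact: anc_lex.
case/and5P: H => hm hc hc' hcv /andP[hc'w hs]; apply: branch_lt_lex.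
by exists m, c, c'; rewrite (isucc_lift hc) (isucc_lift hc').
Qed.

Lemma lex_restrict v w : v \in D -> w \in D -> lex A0 v w -> lex D v w.
Proof.
move=> hv hw /lexE[hvw|hb]; rewrite /lex hv hw ?hvw //=.
have [/negbTE -> ->] := branch_lt_nanc hb; case: hb => m [c [c' [hc hc' hcv hc'w hs]]].
apply/existsP; exists m; apply/existsP; exists c; apply/existsP; exists c'.
rewrite (is_meet_restrict hv hw (branch_lt_meet hc hc' hcv hc'w hs)).
by rewrite (isucc_restrict (D_down hcv hv) hc) (isucc_restrict (D_down hc'w hw) hc') hcv hc'w hs.
Qed.

Lemma is_root_lift r : is_root D r -> is_root A0 r.
Proof.
case/andP=> hr /forallP hmin; have [r0 /andP[_ /forallP hr0]] := exists_root.
have hr0r : anc r0 r by move: (hr0 r); rewrite in_setT.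
have hrr0 : anc r r0 by move: (hmin r0); rewrite (D_down hr0r hr).
by rewrite (anc_anti hrr0 hr0r) /is_root in_setT; apply/forallP.
Qed.

Lemma is_root_restrict d r : d \in D -> is_root A0 r -> is_root D r.
Proof.
move=> hd /andP[_ /forallP hr]; have hr' u : anc r u by move: (hr u); rewrite in_setT.
by rewrite /is_root (D_down (hr' d) hd); apply/forallP => u; rewrite hr' implybT.
Qed.

End DownClosed.

Lemma lexdown_down_closed v u w : anc u w -> w \in lexdown A0 v -> u \in lexdown A0 v.
Proof. by rewrite !in_lexdown => huw; apply: lex_trans (anc_lex huw). Qed.

End OrderedTree.

Section Injection.
Variables S T : otree.
Hypotheses (HS : ordered_tree S) (HT : ordered_tree T).
Variables (f : T -> S) (e : S -> T).
Hypothesis he : injection_on [set: T] [set: S] f e.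

Lemma injection_cancel : cancel e f.
Proof. by case: he => _ hfe _ s; rewrite hfe ?in_setT. Qed.

Lemma injection_inj : injective e.
Proof. exact: can_inj injection_cancel. Qed.

Lemma injection_below w : ot_anc (e (f w)) w.
Proof. by case: he => _ _ hef; rewrite hef ?in_setT. Qed.

Lemma injection_meet v w m :
  is_meet [set: S] v w m -> is_meet [set: T] (e v) (e w) (e m).
Proof. by case: he => -[_ hm _ _] _ _; apply: hm. Qed.

Lemma injection_lex v w : lex [set: S] v w -> lex [set: T] (e v) (e w).
Proof. by case: he => -[_ _ hl _] _ _; apply: hl. Qed.

Lemma injection_anc a b : ot_anc a b -> ot_anc (e a) (e b).
Proof. by move=> hab; case/meetP: (injection_meet (meet_anc HS hab)). Qed.

Lemma injection_on_lexdown x y :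
  (forall s, lex [set: S] s x -> lex [set: T] (e s) y) ->
  (forall w, lex [set: T] w y -> lex [set: S] (f w) x) ->
  injection_on (lexdown [set: T] y) (lexdown [set: S] x) f e.
Proof.
move=> hxy hyx; have maps_e s : s \in lexdown [set: S] x -> e s \in lexdown [set: T] y.
  by rewrite !in_lexdown; apply: hxy.
have closedS := @lexdown_down_closed _ HS x; have closedT := @lexdown_down_closed _ HT y.
split; [split=> // | by move=> s _; apply: injection_cancel
                   | by move=> w _; apply: injection_below].
- move=> v w m hm; have /and3P[hv hw _] := hm.
  apply: (is_meet_restrict closedT (maps_e _ hv) (maps_e _ hw)).
  exact/injection_meet/(is_meet_lift closedS).
- move=> v w hl; have /and3P[hv hw _] := hl.
  apply: (lex_restrict HT closedT (maps_e _ hv) (maps_e _ hw)).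
  exact/injection_lex/(lex_lift HS closedS).
- move=> r hr; have /andP[hrx _] := hr.
  apply: (is_root_restrict closedT (maps_e _ hrx)).
  by case: he => -[_ _ _ hroot] _ _; apply/hroot/(is_root_lift HS closedS).
Qed.

Variables (x : S) (y : T).
Hypotheses (hx : is_leaf [set: S] x) (hy : i_conjugate e x y).

Section NextLeaf.
Variables x' n : S.
Hypotheses (hnl : next_leaf [set: S] x x') (hn : is_meet [set: S] x x' n).

Lemma conjugate_next_spec :
  [/\ lex_lt [set: T] y (e x'), is_meet [set: T] y (e x') (e n) &
      forall z, is_leaf [set: T] z -> lex_lt [set: T] z (e x') ->
        is_meet [set: T] z (e x') (e n) -> lex [set: T] z y].
Proof.
have [_ _ hnext] := hy; have [[_ hyx' [m [hm hym]]] hmax] := hnext x' hnl.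
rewrite -(meet_uniq HT hm (injection_meet hn)); split=> // z hz hzx' hzm.
by apply: hmax; split=> //; exists m.
Qed.

Lemma next_lexdown_e s : lex [set: S] s x -> lex [set: T] (e s) y.
Proof.
move=> hsx; apply: (lex_trans HT (injection_lex hsx)).
have [_ _ hmax] := conjugate_next_spec; have [_ hxx' _] := hnl.
have hbx : branch_lt x x' := leaf_lex_lt_branch HS hx hxx'.
have hbex : branch_lt (e x) (e x').
  have [hanc|//] := (lexE HT _ _).1 (injection_lex (andP hxx').1).
  have exn : x = n := injection_inj (meet_uniq HT (meet_anc HT hanc) (injection_meet hn)).
  by have [/negP[]] := branch_lt_nanc HS hbx; rewrite exn; case/meetP: hn.
have [z [hz hxz]] := leaf_above HT (e x).
have hbz := branch_lt_up HT hbex hxz; have hzm := branch_lt_up_meet HT hbex hxz (injection_meet hn).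
exact (lex_trans HT (anc_lex HT hxz) (hmax z hz (branch_lt_lex_lt HT hbz) hzm)).
Qed.

Lemma next_lexdown_f w : lex [set: T] w y -> lex [set: S] (f w) x.
Proof.
move=> hwy; apply: contraT => nsx.
have [hyx' hyn _] := conjugate_next_spec.
suff /andP[hys nys] : lex_lt [set: T] y (e (f w)).
  have hsy := lex_trans HT (anc_lex HT (injection_below w)) hwy.
  by rewrite (lex_anti HT hys hsy) eqxx in nys.
have hxs : lex_lt [set: S] x (f w).
  have [hle|hsx] := lex_total HS x (f w); last by rewrite hsx in nsx.
  by rewrite /lex_lt hle; apply: contraNneq nsx => <-; apply: (lex_refl HS).
have [hsx'|hx's] := lex_total HS (f w) x'; last first.
  exact: (lex_lt_le_trans HT hyx' (injection_lex hx's)).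
have hsx'_anc := next_leaf_anc HS hnl hxs hsx'.
have [hnx hnx' _] := meetP hn.
have hns : ot_anc n (f w).
  case/orP: (anc_comparable HS hsx'_anc hnx') => // hsn.
  by rewrite (anc_lex HS (anc_trans HS hsn hnx)) in nsx.
have nsn : e (f w) != e n.
  by apply: contraNneq nsx => /injection_inj ->; exact: (anc_lex HS hnx).
exact: (lex_lt_meet_below HT hyn hyx' (injection_anc hns) (injection_anc hsx'_anc) nsn).
Qed.

End NextLeaf.

Lemma conjugate_lexdown :
  (forall s, lex [set: S] s x -> lex [set: T] (e s) y) /\
  (forall w, lex [set: T] w y -> lex [set: S] (f w) x).
Proof.
have [_ hlargest _] := hy; case: (largest_or_next_leaf HS hx) => [hl|[x' hnl]].
  by split=> v _; [exact: (largest_leaf_lex HT _ (hlargest hl))|exact: (largest_leaf_lex HS _ hl)].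
have [n hn] := meet_exists HS x x'.
by split=> ?; [apply: (next_lexdown_e hnl hn)|apply: (next_lexdown_f hnl hn)].
Qed.

End Injection.

Theorem lemma4p14 (S T : otree) (HS : ordered_tree S) (HT : ordered_tree T)
  (f : T -> S) (hf : rigid_surj f)
  (x : S) (hx : is_leaf [set: S] x)
  (y : T) (hy : f_conjugate f x y) :
  f @: lexdown [set: T] y = lexdown [set: S] x /\
  rigid_surj_on (lexdown [set: T] y) (lexdown [set: S] x) f.
Proof.
case: hy => e [he hconj].
have [hxe hyf] := conjugate_lexdown HS HT he hx hconj.
have maps_f w : w \in lexdown [set: T] y -> f w \in lexdown [set: S] x.
  by rewrite !in_lexdown; apply: hyf.
split; last by split=> //; exists e; exact: (injection_on_lexdown HS HT he hxe hyf).
apply/setP => s; apply/imsetP/idP => [[w hw ->]|hs]; first exact: maps_f.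
exists (e s); last by rewrite (injection_cancel he).
by rewrite in_lexdown; apply: hxe; rewrite -in_lexdown.
Qed.
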